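(* Let $R \subseteq T$ be commutative rings and let $I$ be an ideal of $R$ with $IT = I$ (so $I$ is also an ideal of $T$). Let $W$ be a multiplicatively closed subset of $T$, put $V = W \cap R$, and suppose $I \cap W \neq \emptyset$. Then the natural map $R_V \to T_W$ is an isomorphism. *)

From mathcomp Require Import all_boot all_algebra.
Set Implicit Arguments. Unset Strict Implicit. Unset Printing Implicit Defensive.
Import GRing.Theory.
Local Open Scope ring_scope.

Definition is_ideal (A : comPzRingType) (I : A -> Prop) : Prop :=
  [/\ I 0, (forall x y, I x -> I y -> I (x + y)) & (forall a x, I x -> I (a * x))].

Definition mult_closed (A : comPzRingType) (S : A -> Prop) : Prop :=
  S 1 /\ (forall x y, S x -> S y -> S (x * y)).

Definition ext_ideal (R T : comPzRingType) (f : R -> T) (I : R -> Prop) (t : T) : Prop :=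
  exists s : seq (R * T), (forall p, p \in s -> I p.1) /\ t = \sum_(p <- s) f p.1 * p.2.

(* Equality of fractions a/s = a'/s' in the localization S^{-1} A. *)
Definition loc_eq (A : comPzRingType) (S : A -> Prop) (a s a' s' : A) : Prop :=
  exists u, S u /\ u * (a * s' - a' * s) = 0.

(* The natural map V^{-1} R -> W^{-1} T, r/v |-> f(r)/f(v), is bijective
   (it is well defined and a ring map whenever f(V) ⊆ W). *)
Definition natural_loc_map_bijective (R T : comPzRingType) (f : R -> T)
    (V : R -> Prop) (W : T -> Prop) : Prop :=
  (forall r v r' v', V v -> V v' ->
      loc_eq W (f r) (f v) (f r') (f v') -> loc_eq V r v r' v')
  /\ (forall t w, W w -> exists r v, V v /\ loc_eq W t w (f r) (f v)).

(** An element [c] of [I ∩ W] satisfies [c T ⊆ I ⊆ R], so every fraction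
    [t/w] of [T_W] equals [ct/cw] with numerator and denominator in [R], and
    any [u ∈ W] witnessing an equality in [T_W] can be replaced by [cu ∈ V]. *)

From mathcomp Require Import all_boot all_algebra.
Set Implicit Arguments. Unset Strict Implicit. Unset Printing Implicit Defensive.
Import GRing.Theory.
Local Open Scope ring_scope.

Lemma ext_ideal_mul (R T : comPzRingType) (f : R -> T) (I : R -> Prop) i t :
  I i -> ext_ideal f I (f i * t).
Proof.
move=> Ii; exists [:: (i, t)]; split; last by rewrite big_seq1.
by move=> p; rewrite inE => /eqP ->.
Qed.

Section Conductor.

Variables (R T : comPzRingType) (f : {rmorphism R -> T}) (W : T -> Prop).
Hypothesis W_mul : forall x y, W x -> W y -> W (x * y).
Variable c : R.
Hypothesis Wc : W (f c).
Hypothesis mul_conductor : forall t, exists r, f r = f c * t.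

Lemma loc_eq_reflect r v r' v' : injective f ->
  loc_eq W (f r) (f v) (f r') (f v') -> loc_eq (fun x => W (f x)) r v r' v'.
Proof.
move=> finj [u [Wu hu]]; have [cu fcu] := mul_conductor u.
exists cu; split; first by rewrite fcu; apply: W_mul.
apply: finj; rewrite rmorph0 rmorphM rmorphB !rmorphM fcu.
by rewrite -mulrA hu mulr0.
Qed.

Lemma loc_eq_lift t w : W w ->
  exists r v, W (f v) /\ loc_eq W t w (f r) (f v).
Proof.
move=> Ww; have [r fr] := mul_conductor t; have [v fv] := mul_conductor w.
exists r, v; split; first by rewrite fv; apply: W_mul.
exists (f c); split=> //.
by rewrite fr fv mulrCA -(mulrA (f c) t w) (mulrC t w) subrr mulr0.
Qed.

End Conductor.

Theorem lemma4p4 (R T : comPzRingType) (f : {rmorphism R -> T})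
    (I : R -> Prop) (W : T -> Prop) :
  injective f ->
  is_ideal I ->
  (forall t : T, ext_ideal f I t <-> exists i, I i /\ f i = t) ->
  mult_closed W ->
  (exists i, I i /\ W (f i)) ->
  natural_loc_map_bijective f (fun r => W (f r)) W.
Proof.
move=> finj _ ext_eq [_ W_mul] [c [Ic Wc]].
have mul_conductor t : exists r, f r = f c * t.
  by have [r [_ fr]] := (ext_eq _).1 (ext_ideal_mul f t Ic); exists r.
split=> [r v r' v' _ _|t].
  exact (loc_eq_reflect W_mul Wc mul_conductor finj).
exact (loc_eq_lift W_mul Wc mul_conductor t).
Qed.
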